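(* Let $q\in\mathrm{prob}(\{0,1\}^2)$. Then $\{(\pi,\chi^{(1)}):(\pi,\chi)\in\Theta_2,\ \mu_2(\pi,\chi)=q\}=\{\theta\in\Theta_1:\mu_1(\theta)=q_{\cdot+}\}$ and $\{(\pi,\chi^{(2)}):(\pi,\chi)\in\Theta_2,\ \mu_2(\pi,\chi)=q\}=\{\theta\in\Theta_1:\mu_1(\theta)=q_{+\cdot}\}$, where $q_{\cdot+}\in\mathrm{prob}(\{0,1\})$ is $\iota\mapsto q_{\iota0}+q_{\iota1}$ and $q_{+\cdot}$ is $\iota\mapsto q_{0\iota}+q_{1\iota}$.
   Context: For a finite set $\mathcal{X}$, $\mathrm{prob}(\mathcal{X})$ is the set of probability densities on $\mathcal{X}$; $\mathrm{markov}(\mathcal{X},\mathcal{Y})$ the set of maps $(x,y)\mapsto p_{y|x}$ with $p_{\cdot|x}\in\mathrm{prob}(\mathcal{Y})$ for all $x$. For $d\in\{1,2\}$ let $\Theta_d:=\mathrm{prob}(\{0,1\})\times\mathrm{markov}(\{0,1\},\{0,1\}^d)$ and $\mu_d(\pi,\chi)_j:=\sum_{i=0}^1\pi_i\chi_{j|i}$ for $j\in\{0,1\}^d$. For $(\pi,\chi)\in\Theta_2$ and $i,\iota\in\{0,1\}$, $\chi^{(1)}_{\iota|i}:=\chi_{\iota0|i}+\chi_{\iota1|i}$ and $\chi^{(2)}_{\iota|i}:=\chi_{0\iota|i}+\chi_{1\iota|i}$, so $\chi^{(1)},\chi^{(2)}\in\mathrm{markov}(\{0,1\},\{0,1\})$.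 *)

From HB Require Import structures.
From mathcomp Require Import all_boot all_order all_algebra.
Set Implicit Arguments. Unset Strict Implicit. Unset Printing Implicit Defensive.
Import Order.TTheory GRing.Theory Num.Theory.
Local Open Scope ring_scope.

Section Defs.
Variable R : realFieldType.

Definition is_prob (T : finType) (p : {ffun T -> R}) : Prop :=
  (forall t, 0 <= p t) /\ \sum_(t : T) p t = 1.

Definition is_markov (X Y : finType) (k : {ffun X -> {ffun Y -> R}}) : Prop :=
  forall x, is_prob (k x).

(* Theta_d, with {0,1}^1 identified with bool and {0,1}^2 with bool * bool *)
Definition Theta (Y : finType) (th : {ffun bool -> R} * {ffun bool -> {ffun Y -> R}}) : Prop :=
  is_prob th.1 /\ is_markov th.2.

Definition mu (Y : finType) (th : {ffun bool -> R} * {ffun bool -> {ffun Y -> R}}) : {ffun Y -> R} :=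
  [ffun j => \sum_(i : bool) th.1 i * th.2 i j].

Definition chi1 (chi : {ffun bool -> {ffun bool * bool -> R}}) : {ffun bool -> {ffun bool -> R}} :=
  [ffun i => [ffun iota => chi i (iota, false) + chi i (iota, true)]].

Definition chi2 (chi : {ffun bool -> {ffun bool * bool -> R}}) : {ffun bool -> {ffun bool -> R}} :=
  [ffun i => [ffun iota => chi i (false, iota) + chi i (true, iota)]].

Definition margL (q : {ffun bool * bool -> R}) : {ffun bool -> R} :=
  [ffun iota => q (iota, false) + q (iota, true)].

Definition margR (q : {ffun bool * bool -> R}) : {ffun bool -> R} :=
  [ffun iota => q (false, iota) + q (true, iota)].

End Defs.

From HB Require Import structures.
From mathcomp Require Import all_boot all_order all_algebra.
Set Implicit Arguments. Unset Strict Implicit. Unset Printing Implicit Defensive.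
Import Order.TTheory GRing.Theory Num.Theory.
Local Open Scope ring_scope.

(* Marginalising the kernel marginalises the mixture, so every parameter
   lifted from Theta_2 has the right mixture.  Conversely, disintegrate
   q = q_{.+} (a) * c(b | a) and lift (pi, kappa) to the kernel
   chi(a, b | i) = kappa(a | i) * c(b | a): its mixture is
   q_{.+}(a) * c(b | a) = q and its first marginal is kappa.  The second
   marginal is the first one after swapping the two coordinates. *)

Section Marginals.
Variables (R : realFieldType) (A B : finType).

Definition marg_fst (f : {ffun A * B -> R}) : {ffun A -> R} :=
  [ffun a => \sum_(b : B) f (a, b)].

Definition swapf (f : {ffun A * B -> R}) : {ffun B * A -> R} :=
  [ffun t => f (t.2, t.1)].

Definition joint (p : {ffun A -> R}) (c : {ffun A -> {ffun B -> R}}) : {ffun A * B -> R} :=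
  [ffun t => p t.1 * c t.1 t.2].

Lemma sum_marg_fst (f : {ffun A * B -> R}) :
  \sum_(a : A) marg_fst f a = \sum_(t : A * B) f t.
Proof.
under eq_bigr do rewrite ffunE.
by rewrite pair_bigA; apply: eq_bigr => -[].
Qed.

Lemma is_prob_marg_fst (f : {ffun A * B -> R}) : is_prob f -> is_prob (marg_fst f).
Proof.
move=> [f_ge0 f_sum]; split; last by rewrite sum_marg_fst.
by move=> a; rewrite ffunE sumr_ge0.
Qed.

Lemma sum_swapf (f : {ffun A * B -> R}) :
  \sum_(t : B * A) swapf f t = \sum_(t : A * B) f t.
Proof.
rewrite -sum_marg_fst (eq_bigr (fun t => f (t.2, t.1))) => [|t _]; last by rewrite ffunE.
rewrite -(pair_bigA _ (fun b a => f (a, b))) exchange_big.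
by apply: eq_bigr => a _; rewrite ffunE.
Qed.

Lemma is_prob_swapf (f : {ffun A * B -> R}) : is_prob f -> is_prob (swapf f).
Proof.
by move=> [f_ge0 f_sum]; split; [move=> t; rewrite ffunE | rewrite sum_swapf].
Qed.

Lemma marg_fst_joint (p : {ffun A -> R}) (c : {ffun A -> {ffun B -> R}}) :
  is_markov c -> marg_fst (joint p c) = p.
Proof.
move=> c_markov; apply/ffunP => a; rewrite ffunE.
under eq_bigr do rewrite ffunE /=.
by rewrite -mulr_sumr (c_markov a).2 mulr1.
Qed.

Lemma is_prob_joint (p : {ffun A -> R}) (c : {ffun A -> {ffun B -> R}}) :
  is_prob p -> is_markov c -> is_prob (joint p c).
Proof.
move=> [p_ge0 p_sum] c_markov; split.
  by move=> t; rewrite ffunE mulr_ge0 // (c_markov t.1).1.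
by rewrite -sum_marg_fst marg_fst_joint.
Qed.

End Marginals.

Lemma swapfK (R : realFieldType) (A B : finType) (f : {ffun A * B -> R}) :
  swapf (swapf f) = f.
Proof. by apply/ffunP => -[a b]; rewrite !ffunE. Qed.

Section Disintegration.
Variables (R : realFieldType) (A B : finType).

(* Conditional density of the second coordinate given the first; where the
   first marginal vanishes any probability density will do, and we take the
   second marginal. *)
Definition cond (q : {ffun A * B -> R}) : {ffun A -> {ffun B -> R}} :=
  [ffun a => if marg_fst q a == 0 then marg_fst (swapf q)
             else [ffun b => q (a, b) / marg_fst q a]].

Lemma is_markov_cond (q : {ffun A * B -> R}) : is_prob q -> is_markov (cond q).
Proof.
move=> q_prob a; rewrite ffunE; case: eqP => [_ | qa_neq0].
  exact/is_prob_marg_fst/is_prob_swapf.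
have /[!ffunE] qa_gt0 : 0 < marg_fst q a.
  by rewrite lt_def (introF eqP qa_neq0) ((is_prob_marg_fst q_prob).1 a).
split=> [b | ]; first by rewrite ffunE divr_ge0 ?q_prob.1 ?ltW.
under eq_bigr do rewrite ffunE.
by rewrite -mulr_suml mulfV ?gt_eqF.
Qed.

Lemma joint_marg_cond (q : {ffun A * B -> R}) :
  is_prob q -> joint (marg_fst q) (cond q) = q.
Proof.
move=> [q_ge0 _]; apply/ffunP => -[a b]; rewrite !ffunE /=.
case: eqP => [qa0 | /eqP qa_neq0].
  by rewrite qa0 mul0r (psumr_eq0P (fun b _ => q_ge0 (a, b)) qa0).
by rewrite ffunE mulrC -mulrA mulVf ?mulr1.
Qed.

End Disintegration.

Section Mixtures.
Variables (R : realFieldType) (A B : finType).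

Definition kmarg_fst (chi : {ffun bool -> {ffun A * B -> R}}) : {ffun bool -> {ffun A -> R}} :=
  [ffun i => marg_fst (chi i)].

Definition kswapf (chi : {ffun bool -> {ffun A * B -> R}}) : {ffun bool -> {ffun B * A -> R}} :=
  [ffun i => swapf (chi i)].

Lemma mu_kmarg_fst (pi : {ffun bool -> R}) (chi : {ffun bool -> {ffun A * B -> R}}) :
  mu (pi, kmarg_fst chi) = marg_fst (mu (pi, chi)).
Proof.
apply/ffunP => a; rewrite !ffunE /=.
under eq_bigr do rewrite !ffunE mulr_sumr.
rewrite exchange_big; apply: eq_bigr => b _.
by rewrite ffunE.
Qed.

Lemma mu_kswapf (pi : {ffun bool -> R}) (chi : {ffun bool -> {ffun A * B -> R}}) :
  mu (pi, kswapf chi) = swapf (mu (pi, chi)).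
Proof. by apply/ffunP => t; rewrite !ffunE; apply: eq_bigr => i _; rewrite !ffunE. Qed.

Lemma mu_joint (pi : {ffun bool -> R}) (kappa : {ffun bool -> {ffun A -> R}})
    (c : {ffun A -> {ffun B -> R}}) :
  mu (pi, [ffun i => joint (kappa i) c]) = joint (mu (pi, kappa)) c.
Proof.
apply/ffunP => t; rewrite !ffunE mulr_suml.
by apply: eq_bigr => i _; rewrite !ffunE mulrA.
Qed.

Lemma Theta_kmarg_fst (th : {ffun bool -> R} * {ffun bool -> {ffun A * B -> R}}) :
  Theta th -> Theta (th.1, kmarg_fst th.2).
Proof. by move=> [pi_prob chi_markov]; split=> // i; rewrite ffunE; apply: is_prob_marg_fst. Qed.

Lemma Theta_kswapf (th : {ffun bool -> R} * {ffun bool -> {ffun A * B -> R}}) :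
  Theta th -> Theta (th.1, kswapf th.2).
Proof. by move=> [pi_prob chi_markov]; split=> // i; rewrite ffunE; apply: is_prob_swapf. Qed.

Lemma Theta_marg_fst_image (q : {ffun A * B -> R}) :
  is_prob q ->
  forall th : {ffun bool -> R} * {ffun bool -> {ffun A -> R}},
    (exists th2 : {ffun bool -> R} * {ffun bool -> {ffun A * B -> R}},
       [/\ Theta th2, mu th2 = q & th = (th2.1, kmarg_fst th2.2)])
    <-> (Theta th /\ mu th = marg_fst q).
Proof.
move=> q_prob [pi kappa]; split.
  move=> [[pi2 chi] [th2_Theta <- ->]].
  by split; [exact: Theta_kmarg_fst | rewrite mu_kmarg_fst].
move=> [[pi_prob kappa_markov] mu_kappa].
have cond_markov := is_markov_cond q_prob.
exists (pi, [ffun i => joint (kappa i) (cond q)]); split.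
- by split=> // i; rewrite ffunE; apply: is_prob_joint.
- by rewrite mu_joint mu_kappa joint_marg_cond.
- by congr (_, _); apply/ffunP => i; rewrite !ffunE marg_fst_joint.
Qed.

End Mixtures.

Lemma kswapfK (R : realFieldType) (A B : finType) (chi : {ffun bool -> {ffun A * B -> R}}) :
  kswapf (kswapf chi) = chi.
Proof. by apply/ffunP => i; rewrite !ffunE swapfK. Qed.

Lemma chi1E (R : realFieldType) (chi : {ffun bool -> {ffun bool * bool -> R}}) :
  chi1 chi = kmarg_fst chi.
Proof. by apply/ffunP => i; apply/ffunP => a; rewrite !ffunE big_bool addrC. Qed.

Lemma chi2E (R : realFieldType) (chi : {ffun bool -> {ffun bool * bool -> R}}) :
  chi2 chi = kmarg_fst (kswapf chi).
Proof. by apply/ffunP => i; apply/ffunP => a; rewrite !ffunE big_bool !ffunE addrC. Qed.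

Lemma margLE (R : realFieldType) (q : {ffun bool * bool -> R}) : margL q = marg_fst q.
Proof. by apply/ffunP => a; rewrite !ffunE big_bool addrC. Qed.

Lemma margRE (R : realFieldType) (q : {ffun bool * bool -> R}) :
  margR q = marg_fst (swapf q).
Proof. by apply/ffunP => a; rewrite !ffunE big_bool !ffunE addrC. Qed.

Theorem lemma2 (R : realFieldType) (q : {ffun bool * bool -> R}) :
  is_prob q ->
  (forall th : {ffun bool -> R} * {ffun bool -> {ffun bool -> R}},
     (exists th2 : {ffun bool -> R} * {ffun bool -> {ffun bool * bool -> R}},
        [/\ Theta th2, mu th2 = q & th = (th2.1, chi1 th2.2)])
     <-> (Theta th /\ mu th = margL q))
  /\
  (forall th : {ffun bool -> R} * {ffun bool -> {ffun bool -> R}},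
     (exists th2 : {ffun bool -> R} * {ffun bool -> {ffun bool * bool -> R}},
        [/\ Theta th2, mu th2 = q & th = (th2.1, chi2 th2.2)])
     <-> (Theta th /\ mu th = margR q)).
Proof.
move=> q_prob; split=> th.
  rewrite margLE; apply: iff_trans (Theta_marg_fst_image q_prob th).
  by split=> -[th2 [th2_Theta mu_th2 ->]]; exists th2; rewrite chi1E.
rewrite margRE; apply: iff_trans (Theta_marg_fst_image (is_prob_swapf q_prob) th).
split=> -[[pi chi] [th2_Theta mu_th2 ->]]; exists (pi, kswapf chi).
  split; first exact: (Theta_kswapf th2_Theta).
    by rewrite mu_kswapf mu_th2.
  by rewrite /= chi2E.
split; first exact: (Theta_kswapf th2_Theta).
  by rewrite mu_kswapf mu_th2 swapfK.
by rewrite /= chi2E kswapfK.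
Qed.
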